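(* Let $s\geq1$ be an integer, $\alpha'>\alpha>1$ and $\theta_1,\theta_2>0$. If $X$ has distribution $\Gamma(\alpha',\theta_1)$ and $Y$ has distribution $\Gamma(\alpha,\theta_2)$, then $X\leq_{s\text{-IFR}}Y$, i.e. the $\Gamma(\alpha',\theta_1)$ distribution is more $s$-IFR than the $\Gamma(\alpha,\theta_2)$ distribution.
   Context: $\Gamma(\alpha,\theta)$ is the Gamma distribution with density $\frac{x^{\alpha-1}e^{-x/\theta}}{\theta^\alpha\Gamma(\alpha)}$, $x>0$. For a nonnegative random variable $X$ with density $f_X$: $\overline{T}_{X,0}=f_X$, $\widetilde{\mu}_{X,0}=1$, and for $s\geq1$, $x\geq0$, $\overline{T}_{X,s}(x)=\frac{1}{\widetilde{\mu}_{X,s-1}}\int_x^\infty \overline{T}_{X,s-1}(t)\,dt$ with $\widetilde{\mu}_{X,s}=\int_0^\infty \overline{T}_{X,s}(t)\,dt$, and $\overline{T}_{X,s}(x)=1$ for $x<0$. We write $X\leq_{s\text{-IFR}}Y$ (''$X$ is more $s$-IFR than $Y$'') if $c_s(x)=\overline{T}_{Y,s}^{-1}(\overline{T}_{X,s}(x))$ is convex. *)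

From Stdlib Require Import Reals.
From Coquelicot Require Import Coquelicot.
Open Scope R_scope.

Definition int_from (f : R -> R) (a : R) : R :=
  RInt_gen f (at_point a) (Rbar_locally p_infty).

Definition Gamma_fun (a : R) : R :=
  int_from (fun t => Rpower t (a - 1) * exp (- t)) 0.

Definition gamma_density (alpha theta : R) (x : R) : R :=
  if Rlt_dec 0 x then
    Rpower x (alpha - 1) * exp (- x / theta) / (Rpower theta alpha * Gamma_fun alpha)
  else 0.

(* Iterated tail transforms  \overline{T}_{X,s}  of a density f:
   T_0 = f;  for s >= 1:  T_s(x) = 1 for x < 0, and
   T_s(x) = (1/mu_{s-1}) \int_x^oo T_{s-1}(t) dt for x >= 0,
   where mu_0 = 1 and mu_s = \int_0^oo T_s for s >= 1. *)
Fixpoint tailT (f : R -> R) (s : nat) : R -> R :=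
  match s with
  | O => f
  | S s' =>
      let mu := match s' with O => 1 | _ => int_from (tailT f s') 0 end in
      fun x => if Rlt_dec x 0 then 1 else int_from (tailT f s') x / mu
  end.

Definition tailmu (f : R -> R) (s : nat) : R :=
  match s with O => 1 | _ => int_from (tailT f s) 0 end.

Definition convex_on (D : R -> Prop) (g : R -> R) : Prop :=
  forall x y t, D x -> D y -> 0 <= t <= 1 ->
    g (t * x + (1 - t) * y) <= t * g x + (1 - t) * g y.

(* c is the function  c_s = T_{Y,s}^{-1} o T_{X,s}  on [0, oo):
   for x >= 0, c x is a point of [0, oo) where T_{Y,s} takes the value T_{X,s}(x). *)
Definition is_sIFR_comparison (fX fY : R -> R) (s : nat) (c : R -> R) : Prop :=
  forall x, 0 <= x -> 0 <= c x /\ tailT fY s (c x) = tailT fX s x.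

(* X <=_{s-IFR} Y : c_s exists and is convex (every such c is convex). *)
Definition more_sIFR (fX fY : R -> R) (s : nat) : Prop :=
  (exists c, is_sIFR_comparison fX fY s c) /\
  (forall c, is_sIFR_comparison fX fY s c -> convex_on (fun x => 0 <= x) c).

From Stdlib Require Import Reals Lra Psatz Lia List Classical ClassicalEpsilon FunctionalExtensionality.
From Coquelicot Require Import Coquelicot.
Open Scope R_scope.

(* Let c = T_{Y,s}^{-1} o T_{X,s}; it is increasing. If c rose strictly above one of its chords,
   with slope a > 0 and intercept b, then D(z) = T_{X,s}(z) - T_{Y,s}(a z + b) would vanish at
   both ends of the chord, be negative inside it and tend to 0 at infinity, and for b < 0 it
   would also be negative at the root -b/a of a z + b, where T_{Y,s} is still 1.  Now D' is a
   negative multiple of T_{X,s-1}(z) - lam T_{Y,s-1}(a z + b) for some lam > 0, so the mean value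
   theorem passes these sign changes (or the vanishing of D on a half-line) down one level, and
   after s steps to f_X(z) - lam f_Y(a z + b): three sign changes if b >= 0, four if b < 0.
   For Gamma densities this difference has the sign of the log-ratio, whose derivative is
   Q(z) / (z (a z + b)) with Q quadratic, and alpha' > alpha leaves Q too few sign changes. *)

(** * Improper integrals of exponentially dominated functions *)

Lemma ball_R_Rabs (x e y : R) : ball x e y -> Rabs (y - x) < e.
Proof. easy. Qed.

Lemma MVT_open (f df : R -> R) (a b : R) : a < b ->
  (forall c, a < c < b -> is_derive f c (df c)) ->
  (forall c, a <= c <= b -> continuity_pt f c) ->
  exists c, a < c < b /\ f b - f a = df c * (b - a).
Proof.
  intros Hab Hd Hc.
  assert (pr1 : forall c, a < c < b -> derivable_pt f c).
  { intros c Hc'. exists (df c). apply is_derive_Reals, Hd, Hc'. }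
  assert (pr2 : forall c, a < c < b -> derivable_pt id c).
  { intros c _. apply derivable_pt_id. }
  destruct (MVT f id a b pr1 pr2 Hab Hc) as [c [Hcab Hmvt]].
  { intros c _. apply derivable_continuous_pt, derivable_pt_id. }
  exists c. split; [exact Hcab|].
  rewrite (derive_pt_eq_0 f c (df c) (pr1 c Hcab)) in Hmvt by apply is_derive_Reals, Hd, Hcab.
  rewrite (derive_pt_eq_0 id c 1 (pr2 c Hcab)) in Hmvt by apply derivable_pt_lim_id.
  unfold id in Hmvt. lra.
Qed.

Lemma continuous_of_ex_derive (f : R -> R) (x : R) : ex_derive f x -> continuous f x.
Proof. apply (ex_derive_continuous (K := R_AbsRing) (V := R_NormedModule)). Qed.

Lemma continuity_pt_of_is_derive (f : R -> R) (x l : R) : is_derive f x l -> continuity_pt f x.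
Proof. intros H. apply derivable_continuous_pt. exists l. apply is_derive_Reals, H. Qed.

Lemma ex_RInt_continuous_R (g : R -> R) (a b : R) : (forall z, continuous g z) -> ex_RInt g a b.
Proof. intros H. apply (ex_RInt_continuous (V := R_CompleteNormedModule)). intros; apply H. Qed.

Lemma is_derive_RInt_upper (g : R -> R) (a x : R) : (forall z, continuous g z) ->
  is_derive (fun b => RInt g a b) x (g x).
Proof.
  intros Hc. apply (is_derive_RInt (V := R_CompleteNormedModule) g _ a); [|apply Hc].
  apply filter_forall. intros b.
  apply (RInt_correct (V := R_CompleteNormedModule)), ex_RInt_continuous_R, Hc.
Qed.

Lemma exp_decay_eventually_lt (A beta eps : R) : 0 < beta -> 0 < eps ->
  exists M, 0 <= M /\ forall u, M < u -> A * exp (- (beta * u)) < eps.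
Proof.
  intros Hb He. exists (Rmax 0 (A / (beta * eps))). split; [apply Rmax_l|].
  intros u Hu.
  pose proof (Rmax_l 0 (A / (beta * eps))). pose proof (Rmax_r 0 (A / (beta * eps))).
  assert (HA : A < eps * (beta * u)).
  { apply (Rmult_lt_reg_r (/ (beta * eps))); [apply Rinv_0_lt_compat; nra|].
    replace (eps * (beta * u) * / (beta * eps)) with u by (field; lra). lra. }
  assert (Hexp : exp (- (beta * u)) * (1 + beta * u) <= 1).
  { rewrite exp_Ropp. pose proof (exp_ineq1_le (beta * u)). pose proof (exp_pos (beta * u)).
    apply (Rmult_le_reg_l (exp (beta * u))); [lra|]. field_simplify; lra. }
  pose proof (exp_pos (- (beta * u))). nra.
Qed.

Lemma is_RInt_exp_decay (A beta u v : R) : 0 < beta ->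
  is_RInt (fun t => A * exp (- (beta * t))) u v
    (A / beta * (exp (- (beta * u)) - exp (- (beta * v)))).
Proof.
  intros Hb.
  set (F := fun t => - (A / beta) * exp (- (beta * t))).
  replace (A / beta * (exp (- (beta * u)) - exp (- (beta * v)))) with (minus (F v) (F u))
    by (unfold F, minus, plus, opp; simpl; field; lra).
  apply (is_RInt_derive F).
  - intros x _. unfold F. auto_derive; [exact I|]. field. lra.
  - intros x _. apply continuous_of_ex_derive. auto_derive. exact I.
Qed.

Lemma lim0_sub_scal_comp_affine (f g : R -> R) (a b lam : R) : 0 < a ->
  filterlim f (Rbar_locally p_infty) (locally 0) ->
  filterlim g (Rbar_locally p_infty) (locally 0) ->
  filterlim (fun z => f z - lam * g (a * z + b)) (Rbar_locally p_infty) (locally 0).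
Proof.
  intros Ha Hf Hg.
  assert (Hlin : is_lim (fun z => a * z + b) p_infty p_infty).
  { intros P [M HM]. exists ((M - b) / a). intros z Hz. apply HM.
    apply (Rmult_lt_compat_l a) in Hz; [|exact Ha].
    replace (a * ((M - b) / a)) with (M - b) in Hz by (field; lra). lra. }
  assert (Hgc : is_lim (fun z => g (a * z + b)) p_infty 0).
  { apply (is_lim_comp g _ p_infty 0 p_infty); [exact Hg|exact Hlin|exists 0; easy]. }
  apply (is_lim_minus f _ p_infty 0 (Rbar_mult lam 0) 0 Hf (is_lim_scal_l _ lam _ _ Hgc)).
  simpl. rewrite Rmult_0_r. unfold is_Rbar_minus, is_Rbar_plus. simpl. f_equal. f_equal. ring.
Qed.

Lemma is_RInt_gen_of_filterlim (g : R -> R) (a l : R) : (forall x, continuous g x) ->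
  filterlim (fun b => RInt g a b) (Rbar_locally p_infty) (locally l) ->
  is_RInt_gen g (at_point a) (Rbar_locally p_infty) l.
Proof.
  intros Hc Hl P HP. destruct (Hl _ HP) as [M HM].
  apply (Filter_prod _ _ _ (fun x => x = a) (fun b => M < b)); [reflexivity|exists M; auto|].
  intros x y -> Hy. exists (RInt g a y). split; [|apply HM, Hy].
  apply (RInt_correct (V := R_CompleteNormedModule)), ex_RInt_continuous_R, Hc.
Qed.

Section ExpDominatedIntegral.
Variables (g : R -> R) (a A beta : R).
Hypothesis beta_pos : 0 < beta.
Hypothesis g_cont : forall x, continuous g x.
Hypothesis g_dom : forall t, a <= t -> Rabs (g t) <= A * exp (- (beta * t)).

Lemma abs_RInt_le_exp_decay (u v : R) : a <= u <= v ->
  Rabs (RInt g u v) <= A / beta * exp (- (beta * u)).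
Proof.
  intros Huv.
  assert (HA : 0 <= A).
  { pose proof (g_dom a (Rle_refl a)). pose proof (Rabs_pos (g a)).
    pose proof (exp_pos (- (beta * a))). nra. }
  eapply Rle_trans; [apply abs_RInt_le; [lra|apply ex_RInt_continuous_R, g_cont]|].
  eapply Rle_trans.
  { apply (RInt_le _ (fun t => A * exp (- (beta * t)))); [lra| | |].
    - apply ex_RInt_continuous_R. intros z. apply (continuous_comp g Rabs); [apply g_cont|apply continuous_Rabs].
    - eexists. apply is_RInt_exp_decay, beta_pos.
    - intros x Hx. apply g_dom. lra. }
  rewrite (is_RInt_unique _ _ _ _ (is_RInt_exp_decay A beta u v beta_pos)).
  pose proof (exp_pos (- (beta * v))). assert (0 <= A / beta) by (apply Rdiv_le_0_compat; lra).
  nra.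
Qed.

Lemma RInt_tail_converges (u : R) : a <= u ->
  exists l, filterlim (fun b => RInt g u b) (Rbar_locally p_infty) (locally l).
Proof.
  intros Hu. apply (filterlim_locally_cauchy (F := Rbar_locally p_infty)). intros eps.
  destruct (exp_decay_eventually_lt (A / beta) beta eps beta_pos (cond_pos eps)) as [M [_ HM]].
  pose proof (Rmax_l u M). pose proof (Rmax_r u M).
  assert (Hsmall : forall v w, Rmax u M < v -> v <= w -> Rabs (RInt g u w - RInt g u v) < eps).
  { intros v w Hv Hvw.
    assert (Hsplit : RInt g u v + RInt g v w = RInt g u w)
      by (apply (RInt_Chasles (V := R_CompleteNormedModule)); apply ex_RInt_continuous_R, g_cont).
    replace (RInt g u w - RInt g u v) with (RInt g v w) by lra.
    apply (Rle_lt_trans _ _ _ (abs_RInt_le_exp_decay v w ltac:(lra))), HM. lra. }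
  exists (fun x => Rmax u M < x). split; [exists (Rmax u M); auto|].
  intros v w Hv Hw. change (Rabs (RInt g u w - RInt g u v) < eps).
  destruct (Rle_lt_dec v w).
  - apply Hsmall; lra.
  - rewrite Rabs_minus_sym. apply Hsmall; lra.
Qed.

Lemma int_from_lim (u : R) : a <= u ->
  filterlim (fun b => RInt g u b) (Rbar_locally p_infty) (locally (int_from g u)).
Proof.
  intros Hu. destruct (RInt_tail_converges u Hu) as [l Hl].
  assert (E : int_from g u = l).
  { unfold int_from. apply (is_RInt_gen_unique (V := R_CompleteNormedModule)).
    exact (is_RInt_gen_of_filterlim g u l g_cont Hl). }
  rewrite E. exact Hl.
Qed.

Lemma is_RInt_gen_int_from (u : R) : a <= u ->
  is_RInt_gen g (at_point u) (Rbar_locally p_infty) (int_from g u).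
Proof. intros Hu. exact (is_RInt_gen_of_filterlim g u _ g_cont (int_from_lim u Hu)). Qed.

Lemma int_from_Chasles (u v : R) : a <= v -> int_from g u = RInt g u v + int_from g v.
Proof.
  intros Hv. unfold int_from at 1. apply (is_RInt_gen_unique (V := R_CompleteNormedModule)).
  apply (is_RInt_gen_Chasles g v); [|apply is_RInt_gen_int_from, Hv].
  apply is_RInt_gen_at_point, (RInt_correct (V := R_CompleteNormedModule)), ex_RInt_continuous_R, g_cont.
Qed.

Lemma int_from_ge0 (u : R) : a <= u -> (forall t, u <= t -> 0 <= g t) -> 0 <= int_from g u.
Proof.
  intros Hu Hg.
  apply (filterlim_le (F := Rbar_locally p_infty) (fun _ => 0) (fun b => RInt g u b) 0 (int_from g u));
    [|apply filterlim_const|apply int_from_lim, Hu].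
  exists u. intros b Hb. apply RInt_ge_0; [lra|apply ex_RInt_continuous_R, g_cont|].
  intros t Ht. apply Hg. lra.
Qed.

Lemma int_from_le_exp_decay (u : R) : a <= u -> int_from g u <= A / beta * exp (- (beta * u)).
Proof.
  intros Hu.
  apply (filterlim_le (F := Rbar_locally p_infty) (fun b => RInt g u b) (fun _ => A / beta * exp (- (beta * u)))
    (int_from g u) (A / beta * exp (- (beta * u))));
    [|apply int_from_lim, Hu|apply filterlim_const].
  exists u. intros b Hb. eapply Rle_trans; [apply Rle_abs|apply abs_RInt_le_exp_decay; lra].
Qed.

Lemma int_from_gt0 (u : R) : a <= u ->
  (forall t, u < t -> 0 < g t) -> (forall t, u <= t -> 0 <= g t) -> 0 < int_from g u.
Proof.
  intros Hu Hpos Hge. rewrite (int_from_Chasles u (u + 1)) by lra.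
  assert (0 < RInt g u (u + 1)).
  { apply RInt_gt_0; [lra| |intros; apply g_cont]. intros t Ht. apply Hpos. lra. }
  assert (0 <= int_from g (u + 1)) by (apply int_from_ge0; intros; [lra|apply Hge; lra]).
  lra.
Qed.

End ExpDominatedIntegral.

(** * Iterated tail transforms *)

(* The class of functions preserved by [next_tail]; it contains the Gamma densities. *)
Record exp_decaying (g : R -> R) : Prop := {
  exp_decaying_cont : forall x, continuous g x;
  exp_decaying_pos : forall x, 0 < x -> 0 < g x;
  exp_decaying_ge0 : forall x, 0 <= g x;
  exp_decaying_bound : exists A beta, 0 < beta /\
    forall x, 0 <= x -> g x <= A * exp (- (beta * x)) }.

Section ExpDecaying.
Variable g : R -> R.
Hypothesis g_dec : exp_decaying g.

Lemma exp_decaying_dom : exists A beta, 0 < beta /\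
  forall x, 0 <= x -> Rabs (g x) <= A * exp (- (beta * x)).
Proof.
  destruct (exp_decaying_bound g g_dec) as (A & beta & Hb & Hle).
  exists A, beta. split; [exact Hb|]. intros x Hx.
  rewrite Rabs_pos_eq by apply (exp_decaying_ge0 g g_dec). auto.
Qed.

Lemma exp_decaying_int_from_Chasles (u v : R) : 0 <= v -> int_from g u = RInt g u v + int_from g v.
Proof.
  destruct exp_decaying_dom as (A & beta & Hb & Hdom).
  apply (int_from_Chasles g 0 A beta); auto. apply (exp_decaying_cont g g_dec).
Qed.

Lemma exp_decaying_int_from_pos (u : R) : 0 <= u -> 0 < int_from g u.
Proof.
  intros Hu. destruct exp_decaying_dom as (A & beta & Hb & Hdom).
  apply (int_from_gt0 g 0 A beta); auto.
  - apply (exp_decaying_cont g g_dec).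
  - intros t Ht. apply (exp_decaying_pos g g_dec). lra.
  - intros t _. apply (exp_decaying_ge0 g g_dec).
Qed.

Lemma exp_decaying_int_from_lim (u : R) : 0 <= u ->
  filterlim (fun b => RInt g u b) (Rbar_locally p_infty) (locally (int_from g u)).
Proof.
  intros Hu. destruct exp_decaying_dom as (A & beta & Hb & Hdom).
  apply (int_from_lim g 0 A beta); auto. apply (exp_decaying_cont g g_dec).
Qed.

Lemma exp_decaying_is_RInt_gen (u : R) : 0 <= u ->
  is_RInt_gen g (at_point u) (Rbar_locally p_infty) (int_from g u).
Proof.
  intros Hu. apply is_RInt_gen_of_filterlim; [apply (exp_decaying_cont g g_dec)|].
  apply exp_decaying_int_from_lim, Hu.
Qed.

Lemma exp_decaying_div (K : R) : 0 < K -> exp_decaying (fun x => g x / K).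
Proof.
  intros HK. pose proof (Rinv_0_lt_compat K HK).
  destruct g_dec as [Hc Hpos Hge (A & beta & Hb & Hle)]. split.
  - intros x. apply (continuous_scal_l g (/ K)), Hc.
  - intros x Hx. apply Rdiv_lt_0_compat; auto.
  - intros x. apply Rdiv_le_0_compat; auto.
  - exists (A / K), beta. split; [exact Hb|]. intros x Hx.
    replace (A / K * exp (- (beta * x))) with (A * exp (- (beta * x)) / K) by (field; lra).
    apply Rmult_le_compat_r; [lra|auto].
Qed.

Lemma exp_decaying_int_from_div (K u : R) : 0 <= u ->
  int_from (fun x => g x / K) u = int_from g u / K.
Proof.
  intros Hu. unfold int_from at 1. apply (is_RInt_gen_unique (V := R_CompleteNormedModule)).
  apply (is_RInt_gen_ext (fun x => scal (/ K) (g x))).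
  { apply filter_forall. intros _ t _. apply Rmult_comm. }
  replace (int_from g u / K) with (scal (/ K) (int_from g u))
    by (unfold scal; simpl; unfold mult, Rdiv; simpl; apply Rmult_comm).
  apply (is_RInt_gen_scal g (/ K)), exp_decaying_is_RInt_gen, Hu.
Qed.

Lemma exp_decaying_lim0 : filterlim g (Rbar_locally p_infty) (locally 0).
Proof.
  destruct (exp_decaying_bound g g_dec) as (A & beta & Hb & Hle).
  intros P [eps HP].
  destruct (exp_decay_eventually_lt A beta eps Hb (cond_pos eps)) as [M [HM0 HM]].
  exists M. intros x Hx. apply HP. change (Rabs (g x - 0) < eps).
  rewrite Rminus_0_r, Rabs_pos_eq by apply (exp_decaying_ge0 g g_dec).
  eapply Rle_lt_trans; [apply Hle; lra|apply HM, Hx].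
Qed.

End ExpDecaying.

Definition next_tail (g : R -> R) (x : R) : R :=
  if Rlt_dec x 0 then 1 else int_from g x / int_from g 0.

Section NextTail.
Variable g : R -> R.
Hypothesis g_dec : exp_decaying g.

Let m := int_from g 0.

Lemma next_tail_nonpos (x : R) : x <= 0 -> next_tail g x = 1.
Proof.
  intros Hx. unfold next_tail. destruct (Rlt_dec x 0) as [|Hx0]; [reflexivity|].
  replace x with 0 by lra. field. apply Rgt_not_eq, exp_decaying_int_from_pos; auto; lra.
Qed.

Lemma next_tail_RInt (x : R) : next_tail g x = 1 - RInt g 0 ((x + Rabs x) / 2) / m.
Proof.
  pose proof (exp_decaying_int_from_pos g g_dec 0 (Rle_refl 0)) as Hm.
  destruct (Rle_lt_dec 0 x) as [Hx|Hx].
  - rewrite Rabs_pos_eq by exact Hx. replace ((x + x) / 2) with x by field.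
    unfold next_tail. destruct (Rlt_dec x 0); [lra|].
    unfold m. rewrite (exp_decaying_int_from_Chasles g g_dec 0 x Hx). field.
    rewrite <- (exp_decaying_int_from_Chasles g g_dec 0 x Hx). lra.
  - rewrite Rabs_left by exact Hx. replace ((x + - x) / 2) with 0 by field.
    rewrite RInt_point, next_tail_nonpos by lra. unfold zero; simpl. field. unfold m; lra.
Qed.

Lemma next_tail_continuous (x : R) : continuous (next_tail g) x.
Proof.
  apply (continuous_ext (fun x => 1 - RInt g 0 ((x + Rabs x) / 2) / m)).
  { intros t. symmetry. apply next_tail_RInt. }
  apply (continuous_minus (fun _ => 1) (fun x => RInt g 0 ((x + Rabs x) / 2) / m));
    [apply continuous_const|].
  apply (continuous_scal_l (fun x => RInt g 0 ((x + Rabs x) / 2)) (/ m)).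
  apply (continuous_comp (fun x => (x + Rabs x) / 2) (fun b => RInt g 0 b)).
  - apply (continuous_scal_l (fun x => x + Rabs x) (/ 2)).
    apply (continuous_plus (fun x => x) Rabs); [apply continuous_id|apply continuous_Rabs].
  - apply continuous_of_ex_derive. eexists.
    apply is_derive_RInt_upper, (exp_decaying_cont g g_dec).
Qed.

Lemma next_tail_derive (x : R) : 0 < x -> is_derive (next_tail g) x (- g x / m).
Proof.
  intros Hx.
  pose proof (exp_decaying_int_from_pos g g_dec 0 (Rle_refl 0)) as Hm.
  apply (is_derive_ext_loc (fun t => 1 - RInt g 0 t / m)).
  - exists (mkposreal x Hx). intros t Ht. apply ball_R_Rabs, Rabs_def2 in Ht. simpl in Ht.
    rewrite next_tail_RInt, Rabs_pos_eq by lra.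
    assert (Ehalf : forall y : R, (y + y) / 2 = y) by (intros; field).
    rewrite Ehalf. reflexivity.
  - pose proof (exp_decaying_cont g g_dec) as Hc.
    auto_derive; [|field; unfold m; lra].
    split; [apply ex_RInt_continuous_R, Hc|].
    split; [|exact I]. apply filter_forall. intros t. apply continuity_pt_filterlim, Hc.
Qed.

Lemma next_tail_decreasing (x y : R) : 0 <= x < y -> next_tail g y < next_tail g x.
Proof.
  intros Hxy.
  pose proof (exp_decaying_int_from_pos g g_dec 0 (Rle_refl 0)) as Hm.
  destruct (MVT_open (next_tail g) (fun t => - g t / m) x y) as [c [Hc Hmvt]]; [lra| | |].
  - intros c Hc. apply next_tail_derive. lra.
  - intros c _. apply continuity_pt_filterlim, next_tail_continuous.
  - assert (0 < g c / m * (y - x)).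
    { apply Rmult_lt_0_compat; [|lra].
      apply Rdiv_lt_0_compat; [apply (exp_decaying_pos g g_dec); lra|exact Hm]. }
    replace (- g c / m) with (- (g c / m)) in Hmvt by (unfold Rdiv; ring). lra.
Qed.

Lemma next_tail_exp_decaying : exp_decaying (next_tail g).
Proof.
  pose proof (exp_decaying_int_from_pos g g_dec 0 (Rle_refl 0)) as Hm.
  assert (Hpos : forall x, 0 < next_tail g x).
  { intros x. unfold next_tail. destruct (Rlt_dec x 0); [lra|].
    apply Rdiv_lt_0_compat; [apply exp_decaying_int_from_pos; auto; lra|exact Hm]. }
  split.
  - apply next_tail_continuous.
  - intros x _. apply Hpos.
  - intros x. left. apply Hpos.
  - destruct (exp_decaying_dom g g_dec) as (A & beta & Hb & Hdom).
    exists (A / beta / m), beta. split; [exact Hb|]. intros x Hx.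
    unfold next_tail. destruct (Rlt_dec x 0); [lra|].
    replace (A / beta / m * exp (- (beta * x))) with (A / beta * exp (- (beta * x)) / m)
      by (field; unfold m; lra).
    apply Rmult_le_compat_r; [left; apply Rinv_0_lt_compat, Hm|].
    apply (int_from_le_exp_decay g 0 A beta); auto. apply (exp_decaying_cont g g_dec).
Qed.

End NextTail.

Section IteratedTails.
Variable f : R -> R.
Hypothesis f_dec : exp_decaying f.
Hypothesis f_int1 : int_from f 0 = 1.

Lemma tailT_S (k : nat) : tailT f (S k) = next_tail (tailT f k).
Proof.
  apply functional_extensionality. intros x. unfold next_tail.
  destruct k; simpl; [rewrite f_int1|]; reflexivity.
Qed.

Lemma tailT_exp_decaying (k : nat) : exp_decaying (tailT f k).
Proof.
  induction k as [|k IH]; [exact f_dec|].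
  rewrite tailT_S. apply next_tail_exp_decaying, IH.
Qed.

Lemma tailT_int_from_pos (k : nat) : 0 < int_from (tailT f k) 0.
Proof. apply exp_decaying_int_from_pos, Rle_refl. apply tailT_exp_decaying. Qed.

Lemma tailT_S_nonpos (k : nat) (x : R) : x <= 0 -> tailT f (S k) x = 1.
Proof. rewrite tailT_S. apply next_tail_nonpos, tailT_exp_decaying. Qed.

Lemma tailT_S_derive (k : nat) (x : R) : 0 < x ->
  is_derive (tailT f (S k)) x (- tailT f k x / int_from (tailT f k) 0).
Proof. rewrite tailT_S. apply next_tail_derive, tailT_exp_decaying. Qed.

Lemma tailT_S_decreasing (k : nat) (x y : R) : 0 <= x < y -> tailT f (S k) y < tailT f (S k) x.
Proof. rewrite tailT_S. apply next_tail_decreasing, tailT_exp_decaying. Qed.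

Lemma tailT_S_in_unit (k : nat) (x : R) : 0 <= x -> 0 < tailT f (S k) x <= 1.
Proof.
  intros Hx. split.
  - destruct (Req_dec x 0) as [->|Hx0]; [rewrite tailT_S_nonpos by lra; lra|].
    apply (exp_decaying_pos _ (tailT_exp_decaying (S k))). lra.
  - destruct (Req_dec x 0) as [->|Hx0]; [rewrite tailT_S_nonpos by lra; lra|].
    rewrite <- (tailT_S_nonpos k 0) by lra. left. apply tailT_S_decreasing. lra.
Qed.

Lemma tailT_S_attains (k : nat) (v : R) : 0 < v <= 1 -> exists y, 0 <= y /\ tailT f (S k) y = v.
Proof.
  intros Hv. pose proof (tailT_exp_decaying (S k)) as Hdec.
  destruct (exp_decaying_lim0 _ Hdec (fun t => Rabs t < v)) as [M HM].
  { exists (mkposreal v (proj1 Hv)). intros t Ht. apply ball_R_Rabs in Ht. rewrite Rminus_0_r in Ht. exact Ht. }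
  set (w := Rmax M 0 + 1). pose proof (Rmax_l M 0). pose proof (Rmax_r M 0).
  assert (Hw : Rabs (tailT f (S k) w) < v) by (apply HM; unfold w; lra).
  apply Rabs_def2 in Hw.
  destruct (IVT_gen (tailT f (S k)) 0 w v) as [y [Hy Hyv]].
  - intros t. apply continuity_pt_filterlim, (exp_decaying_cont _ Hdec).
  - rewrite tailT_S_nonpos, Rmin_right, Rmax_left by lra. lra.
  - exists y. rewrite Rmin_left in Hy by (unfold w; lra). split; [lra|exact Hyv].
Qed.

End IteratedTails.

Section Comparison.
Variables fX fY : R -> R.
Hypothesis fX_dec : exp_decaying fX.
Hypothesis fY_dec : exp_decaying fY.
Hypothesis fX_int1 : int_from fX 0 = 1.
Hypothesis fY_int1 : int_from fY 0 = 1.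

Lemma sIFR_comparison_exists (k : nat) : exists c, is_sIFR_comparison fX fY (S k) c.
Proof.
  set (P := fun x y => 0 <= y /\ tailT fY (S k) y = tailT fX (S k) x).
  exists (fun x => epsilon (inhabits 0) (P x)). intros x Hx.
  apply (epsilon_spec (inhabits 0) (P x)), tailT_S_attains, tailT_S_in_unit; assumption.
Qed.

Lemma sIFR_comparison_increasing (k : nat) (c : R -> R) : is_sIFR_comparison fX fY (S k) c ->
  forall x y, 0 <= x < y -> c x < c y.
Proof.
  intros Hc x y Hxy.
  destruct (Hc x ltac:(lra)) as [Hcx Ex]. destruct (Hc y ltac:(lra)) as [Hcy Ey].
  pose proof (tailT_S_decreasing fX fX_dec fX_int1 k x y Hxy) as HX.
  destruct (Rlt_le_dec (c x) (c y)) as [|Hle]; [assumption|exfalso].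
  destruct (Req_dec (c x) (c y)) as [Heq|Hne]; [rewrite <- Ex, <- Ey, Heq in HX; lra|].
  pose proof (tailT_S_decreasing fY fY_dec fY_int1 k (c y) (c x) ltac:(lra)). lra.
Qed.

End Comparison.

Lemma convex_on_of_below_chords (c : R -> R) :
  (forall x z y, 0 <= x < z -> z < y -> c z <= c x + (c y - c x) / (y - x) * (z - x)) ->
  convex_on (fun x => 0 <= x) c.
Proof.
  intros Hchord x y t Hx Hy Ht.
  destruct (Req_dec t 0) as [->|Ht0]; [replace (0 * x + (1 - 0) * y) with y by ring; lra|].
  destruct (Req_dec t 1) as [->|Ht1]; [replace (1 * x + (1 - 1) * y) with x by ring; lra|].
  set (z := t * x + (1 - t) * y).
  destruct (Rtotal_order x y) as [Hxy|[<-|Hxy]].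
  - specialize (Hchord x z y ltac:(unfold z; nra) ltac:(unfold z; nra)).
    replace ((c y - c x) / (y - x) * (z - x)) with ((1 - t) * (c y - c x)) in Hchord
      by (unfold z; field; lra).
    lra.
  - unfold z. replace (t * x + (1 - t) * x) with x by ring. lra.
  - specialize (Hchord y z x ltac:(unfold z; nra) ltac:(unfold z; nra)).
    replace ((c x - c y) / (x - y) * (z - y)) with (t * (c x - c y)) in Hchord
      by (unfold z; field; lra).
    lra.
Qed.

(** * The Gamma density *)

Lemma exp_le_compat (x y : R) : x <= y -> exp x <= exp y.
Proof. intros [H|H]; [left; apply exp_increasing, H|right; rewrite H; reflexivity]. Qed.

Lemma Rpower_lt_of_lt_root (p eps t : R) : 0 < p -> 0 < eps ->
  0 < t < Rpower eps (/ p) -> Rpower t p < eps.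
Proof.
  intros Hp He Ht.
  replace eps with (Rpower (Rpower eps (/ p)) p) at 1.
  - apply Rlt_Rpower_l; lra.
  - rewrite Rpower_mult, Rinv_l, Rpower_1 by lra. reflexivity.
Qed.

Definition gamma_kernel (al th x : R) : R :=
  if Rlt_dec 0 x then Rpower x (al - 1) * exp (- x / th) else 0.

Section GammaKernel.
Variables al th : R.
Hypothesis al_gt1 : 1 < al.
Hypothesis th_pos : 0 < th.

Lemma gamma_kernel_pos (x : R) : 0 < x -> 0 < gamma_kernel al th x.
Proof.
  intros Hx. unfold gamma_kernel. destruct (Rlt_dec 0 x); [|lra].
  apply Rmult_lt_0_compat; [apply exp_pos|apply exp_pos].
Qed.

Lemma gamma_kernel_ge0 (x : R) : 0 <= gamma_kernel al th x.
Proof.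
  unfold gamma_kernel. destruct (Rlt_dec 0 x) as [Hx|]; [|lra].
  left. apply Rmult_lt_0_compat; [apply exp_pos|apply exp_pos].
Qed.

Lemma gamma_kernel_continuous (x : R) : continuous (gamma_kernel al th) x.
Proof.
  destruct (Rtotal_order x 0) as [Hx|[->|Hx]].
  - apply (continuous_ext_loc _ (fun _ => 0)); [|apply continuous_const].
    exists (mkposreal (- x) ltac:(lra)). intros t Ht. apply ball_R_Rabs, Rabs_def2 in Ht. simpl in Ht.
    unfold gamma_kernel. destruct (Rlt_dec 0 t); [lra|reflexivity].
  - apply continuity_pt_filterlim. intros eps Heps.
    exists (Rpower eps (/ (al - 1))). split; [apply exp_pos|].
    intros t [_ Ht]. simpl in Ht |- *. unfold R_dist in Ht |- *.
    unfold gamma_kernel at 2. destruct (Rlt_dec 0 0); [lra|]. rewrite Rminus_0_r in Ht |- *.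
    unfold gamma_kernel. destruct (Rlt_dec 0 t) as [Ht0|]; [|rewrite Rabs_R0; exact Heps].
    rewrite Rabs_pos_eq in Ht by lra.
    assert (Hsmall : Rpower t (al - 1) < eps) by (apply Rpower_lt_of_lt_root; lra).
    assert (Hexp : exp (- t / th) <= 1).
    { rewrite <- exp_0. apply exp_le_compat. unfold Rdiv. rewrite Ropp_mult_distr_l_reverse.
      assert (0 <= t * / th) by (apply Rmult_le_pos; [lra|left; apply Rinv_0_lt_compat, th_pos]).
      lra. }
    pose proof (exp_pos ((al - 1) * ln t)). pose proof (exp_pos (- t / th)).
    unfold Rpower in *. rewrite Rabs_pos_eq by nra. nra.
  - apply (continuous_ext_loc _ (fun t => exp ((al - 1) * ln t) * exp (- t / th))).
    + exists (mkposreal x Hx). intros t Ht. apply ball_R_Rabs, Rabs_def2 in Ht. simpl in Ht.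
      unfold gamma_kernel. destruct (Rlt_dec 0 t); [reflexivity|lra].
    + apply continuous_of_ex_derive. auto_derive. lra.
Qed.

(* From [ln y <= y - 1] at [y = q x / p]: [x^p e^(-2 q x) <= (p / (e q))^p e^(-q x)]. *)
Lemma gamma_kernel_exp_bound : exists B, forall x, 0 <= x ->
  gamma_kernel al th x <= B * exp (- (/ (2 * th) * x)).
Proof.
  set (p := al - 1). set (q := / (2 * th)).
  assert (Hp : 0 < p) by (unfold p; lra).
  assert (Hq : 0 < q) by (unfold q; apply Rinv_0_lt_compat; lra).
  exists (exp (- p - p * ln (q / p))). intros x Hx.
  unfold gamma_kernel. destruct (Rlt_dec 0 x) as [Hx0|]; [|left; apply Rmult_lt_0_compat; apply exp_pos].
  unfold Rpower. rewrite <- !exp_plus. apply exp_le_compat.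
  assert (Hln : ln (q * x / p) <= q * x / p - 1).
  { pose proof (exp_ineq1_le (ln (q * x / p))) as H.
    rewrite exp_ln in H by (apply Rdiv_lt_0_compat; nra). lra. }
  rewrite ln_div, ln_mult in Hln by nra. rewrite ln_div by lra.
  assert (Hpl : p * ln x <= p * (q * x / p - 1 - ln q + ln p)) by (apply Rmult_le_compat_l; lra).
  replace (- x / th) with (- (2 * q * x)) by (unfold q; field; lra).
  replace (p * (q * x / p - 1 - ln q + ln p)) with (q * x - p - p * ln q + p * ln p) in Hpl
    by (field; lra).
  fold p. lra.
Qed.

Lemma gamma_kernel_exp_decaying : exp_decaying (gamma_kernel al th).
Proof.
  split.
  - apply gamma_kernel_continuous.
  - apply gamma_kernel_pos.
  - apply gamma_kernel_ge0.
  - destruct gamma_kernel_exp_bound as [B HB]. exists B, (/ (2 * th)).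
    split; [apply Rinv_0_lt_compat; lra|exact HB].
Qed.

End GammaKernel.

Definition gamma_norm (al th : R) : R := Rpower th al * Gamma_fun al.

Definition gamma_log_density (al th x : R) : R := (al - 1) * ln x - x / th - ln (gamma_norm al th).

Section GammaScaling.
Variables al th : R.
Hypothesis al_gt1 : 1 < al.
Hypothesis th_pos : 0 < th.

Lemma gamma_kernel_scale (y : R) :
  th * gamma_kernel al th (th * y + 0) = Rpower th al * gamma_kernel al 1 y.
Proof.
  unfold gamma_kernel. rewrite Rplus_0_r.
  destruct (Rlt_dec 0 (th * y)) as [H1|H1]; destruct (Rlt_dec 0 y) as [H2|H2];
    [|exfalso; nra|exfalso; nra|ring].
  rewrite <- Rpower_mult_distr by lra.
  replace (- (th * y) / th) with (- y / 1) by (field; lra).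
  replace (Rpower th al) with (th * Rpower th (al - 1)); [ring|].
  rewrite <- (Rpower_1 th) at 1 by lra. rewrite <- Rpower_plus. f_equal. ring.
Qed.

Lemma RInt_gamma_kernel_scale (b : R) :
  RInt (gamma_kernel al th) 0 b = Rpower th al * RInt (gamma_kernel al 1) 0 (b / th).
Proof.
  pose proof (RInt_comp_lin (V := R_CompleteNormedModule) (gamma_kernel al th) th 0 0 (b / th)) as H.
  replace (th * 0 + 0) with 0 in H by ring.
  replace (th * (b / th) + 0) with b in H by (field; lra).
  rewrite <- H by (apply ex_RInt_continuous_R, gamma_kernel_continuous; lra).
  rewrite <- (RInt_scal (V := R_CompleteNormedModule))
    by (apply ex_RInt_continuous_R, gamma_kernel_continuous; lra).
  apply RInt_ext. intros x _. apply gamma_kernel_scale.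
Qed.

Lemma Gamma_fun_eq : Gamma_fun al = int_from (gamma_kernel al 1) 0.
Proof.
  unfold Gamma_fun, int_from at 1. apply (is_RInt_gen_unique (V := R_CompleteNormedModule)).
  apply (is_RInt_gen_ext (gamma_kernel al 1)).
  - apply (Filter_prod _ _ _ (fun x => x = 0) (fun b => 0 < b)); [reflexivity|exists 0; auto|].
    intros x y -> Hy t Ht. simpl in Ht. rewrite Rmin_left, Rmax_right in Ht by lra.
    unfold gamma_kernel. destruct (Rlt_dec 0 t); [|lra]. do 2 f_equal. field.
  - apply exp_decaying_is_RInt_gen; [apply gamma_kernel_exp_decaying; lra|lra].
Qed.

Lemma int_from_gamma_kernel : int_from (gamma_kernel al th) 0 = gamma_norm al th.
Proof.
  assert (Hlim : filterlim (fun b => RInt (gamma_kernel al th) 0 b) (Rbar_locally p_infty)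
                   (locally (Rpower th al * Gamma_fun al))).
  { eapply filterlim_ext; [intros b; symmetry; apply RInt_gamma_kernel_scale|].
    apply (filterlim_comp _ _ _ (fun b => RInt (gamma_kernel al 1) 0 (b / th))
             (fun y => Rpower th al * y) _ (locally (Gamma_fun al)));
      [|apply continuous_of_ex_derive; auto_derive; exact I].
    apply (filterlim_comp _ _ _ (fun b => b / th) (fun b => RInt (gamma_kernel al 1) 0 b) _
             (Rbar_locally p_infty)).
    - intros P [M HM]. exists (M * th). intros x Hx. apply HM.
      apply (Rmult_lt_reg_r th); [lra|]. replace (x / th * th) with x by (field; lra). lra.
    - rewrite Gamma_fun_eq. apply exp_decaying_int_from_lim; [apply gamma_kernel_exp_decaying|]; lra. }
  unfold int_from, gamma_norm. apply (is_RInt_gen_unique (V := R_CompleteNormedModule)).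
  apply is_RInt_gen_of_filterlim; [apply gamma_kernel_continuous|exact Hlim]; lra.
Qed.

Lemma gamma_norm_pos : 0 < gamma_norm al th.
Proof.
  unfold gamma_norm. apply Rmult_lt_0_compat; [apply exp_pos|].
  rewrite Gamma_fun_eq. apply exp_decaying_int_from_pos; [apply gamma_kernel_exp_decaying|]; lra.
Qed.

Lemma gamma_density_kernel :
  gamma_density al th = fun x => gamma_kernel al th x / gamma_norm al th.
Proof.
  apply functional_extensionality. intros x. unfold gamma_density, gamma_kernel, gamma_norm.
  destruct (Rlt_dec 0 x); [reflexivity|]. unfold Rdiv. ring.
Qed.

Lemma gamma_density_exp_decaying : exp_decaying (gamma_density al th).
Proof.
  rewrite gamma_density_kernel.
  apply exp_decaying_div; [apply gamma_kernel_exp_decaying; lra|apply gamma_norm_pos].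
Qed.

Lemma int_from_gamma_density : int_from (gamma_density al th) 0 = 1.
Proof.
  pose proof gamma_norm_pos.
  rewrite gamma_density_kernel, exp_decaying_int_from_div, int_from_gamma_kernel by
    (try apply gamma_kernel_exp_decaying; lra).
  unfold Rdiv. apply Rinv_r. lra.
Qed.

Lemma gamma_density_exp (x : R) : 0 < x ->
  gamma_density al th x = exp (gamma_log_density al th x).
Proof.
  intros Hx. pose proof gamma_norm_pos.
  unfold gamma_density, gamma_log_density. destruct (Rlt_dec 0 x); [|lra].
  unfold gamma_norm in *. set (K := Rpower th al * Gamma_fun al) in *.
  unfold Rdiv. rewrite <- (exp_ln K) at 1 by exact H. rewrite <- exp_Ropp.
  unfold Rpower. rewrite <- !exp_plus. f_equal. ring.
Qed.

End GammaScaling.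

(** * Transfer of sign changes through derivatives *)

Fixpoint alternates (D : R -> R) (s lo : R) (l : list R) : Prop :=
  match l with
  | nil => True
  | p :: l' => lo < p /\ 0 < s * D p /\ alternates D (- s) p l'
  end.

Lemma alternates_weaken (D : R -> R) (s lo lo' : R) (l : list R) :
  lo' <= lo -> alternates D s lo l -> alternates D s lo' l.
Proof. destruct l as [|p l]; simpl; [auto|]. intros Hlo [Hp Hrest]. split; [lra|exact Hrest]. Qed.

Section DerivativeSign.
Variables (F G : R -> R) (C : R).
Hypothesis C_pos : 0 < C.

Lemma sign_of_derivative_between (u v s : R) : u < v ->
  (forall z, u < z < v -> is_derive F z (- C * G z)) ->
  (forall z, u <= z <= v -> continuity_pt F z) ->
  s * (F v - F u) < 0 -> exists q, u < q < v /\ 0 < s * G q.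
Proof.
  intros Huv Hd Hc Hs.
  destruct (MVT_open F (fun z => - C * G z) u v Huv Hd Hc) as [q [Hq Hmvt]].
  exists q. split; [exact Hq|]. rewrite Hmvt in Hs.
  assert (0 < C * (v - u)) by nra. nra.
Qed.

Variable z0 : R.
Hypothesis F_derive : forall z, z0 < z -> is_derive F z (- C * G z).

Lemma sign_of_derivative_beyond (p s : R) :
  filterlim F (Rbar_locally p_infty) (locally 0) ->
  z0 < p -> 0 < s * F p -> exists q, p < q /\ 0 < s * G q.
Proof.
  intros Hlim Hp Hs.
  assert (HFp : 0 < Rabs (F p)) by (apply Rabs_pos_lt; intros E; rewrite E in Hs; lra).
  destruct (Hlim (fun y => Rabs y < Rabs (F p))) as [M HM].
  { exists (mkposreal _ HFp). intros y Hy. apply ball_R_Rabs in Hy. rewrite Rminus_0_r in Hy. exact Hy. }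
  set (w := Rmax M p + 1). pose proof (Rmax_l M p). pose proof (Rmax_r M p).
  assert (Hw : Rabs (F w) < Rabs (F p)) by (apply HM; unfold w; lra).
  destruct (sign_of_derivative_between p w s) as [q [Hq Hsq]]; [unfold w; lra| | | |].
  - intros z Hz. apply F_derive. lra.
  - intros z Hz. apply (continuity_pt_of_is_derive F z (- C * G z)), F_derive. lra.
  - assert (Hsw : Rabs (s * F w) < s * F p).
    { rewrite Rabs_mult, <- (Rabs_pos_eq (s * F p)), Rabs_mult by lra.
      apply Rmult_lt_compat_l; [apply Rabs_pos_lt; intros ->; lra|exact Hw]. }
    apply Rabs_def2 in Hsw. lra.
  - exists q. split; [lra|exact Hsq].
Qed.

Lemma alternates_derivative (l : list R) : forall p s lo,
  filterlim F (Rbar_locally p_infty) (locally 0) ->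
  z0 <= lo -> alternates F s lo (p :: l) ->
  exists l', length l' = length (p :: l) /\ alternates G s p l'.
Proof.
  induction l as [|p2 l IH]; intros p s lo Hlim Hlo Halt.
  - destruct Halt as [Hp [Hs _]].
    destruct (sign_of_derivative_beyond p s Hlim) as [q [Hq Hsq]]; [lra|exact Hs|].
    exists (q :: nil). simpl. repeat split; lra.
  - destruct Halt as [Hp [Hs [Hp2 [Hs2 Halt]]]].
    destruct (IH p2 (- s) p Hlim) as [l' [Hlen Halt']]; [lra|simpl; auto|].
    destruct (sign_of_derivative_between p p2 s Hp2) as [q [Hq Hsq]].
    + intros z Hz. apply F_derive. lra.
    + intros z Hz. apply (continuity_pt_of_is_derive F z (- C * G z)), F_derive. lra.
    + nra.
    + exists (q :: l'). split; [simpl in *; lia|].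
      simpl. repeat split; try lra. apply (alternates_weaken _ _ p2); [lra|exact Halt'].
Qed.

Lemma eventually_zero_derivative (y : R) : z0 <= y ->
  (forall z, y < z -> F z = 0) -> forall z, y < z -> G z = 0.
Proof.
  intros Hy H0 z Hz.
  assert (Hder : is_derive F z 0).
  { apply (is_derive_ext_loc (fun _ => 0)); [|apply (is_derive_const (K := R_AbsRing) (V := R_NormedModule))].
    exists (mkposreal (z - y) ltac:(lra)). intros t Ht. apply ball_R_Rabs, Rabs_def2 in Ht. simpl in Ht.
    symmetry. apply H0. lra. }
  pose proof (is_derive_unique _ _ _ Hder) as E0.
  rewrite (is_derive_unique _ _ _ (F_derive z ltac:(lra))) in E0. nra.
Qed.

End DerivativeSign.

Section SignDescent.
Variables (D : nat -> R -> R -> R) (C : nat -> R) (mu : nat -> R -> R) (z0 : R).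
Hypothesis C_pos : forall k, 0 < C k.
Hypothesis mu_pos : forall k lam, 0 < lam -> 0 < mu k lam.
Hypothesis D_derive : forall k lam, 0 < lam -> forall z, z0 < z ->
  is_derive (D (S k) lam) z (- C k * D k (mu k lam) z).
Hypothesis D_lim0 : forall k lam, 0 < lam ->
  filterlim (D (S k) lam) (Rbar_locally p_infty) (locally 0).

Lemma alternates_descend (k : nat) : forall lam s lo p l, 0 < lam -> z0 <= lo ->
  alternates (D k lam) s lo (p :: l) ->
  exists lam' l', 0 < lam' /\ length l' = length (p :: l) /\ alternates (D 0 lam') s lo l'.
Proof.
  induction k as [|k IH]; intros lam s lo p l Hlam Hlo Halt; [exists lam, (p :: l); auto|].
  destruct (alternates_derivative _ _ _ (C_pos k) z0 (D_derive k lam Hlam) l p s lo (D_lim0 k lam Hlam)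
              Hlo Halt) as [[|q l'] [Hlen Halt']]; [discriminate|].
  destruct (IH (mu k lam) s p q l' (mu_pos k lam Hlam)) as (lam' & l3 & Hlam' & Hlen3 & Halt3);
    [destruct Halt; lra|exact Halt'|].
  exists lam', l3. repeat split; [exact Hlam'|congruence|].
  apply (alternates_weaken _ _ p); [destruct Halt; lra|exact Halt3].
Qed.

Lemma vanishing_descends (k : nat) : forall lam y, 0 < lam -> z0 <= y ->
  (forall z, y < z -> D k lam z = 0) ->
  exists lam', 0 < lam' /\ forall z, y < z -> D 0 lam' z = 0.
Proof.
  induction k as [|k IH]; intros lam y Hlam Hy H0; [exists lam; auto|].
  apply (IH (mu k lam) y (mu_pos k lam Hlam) Hy).
  apply (eventually_zero_derivative _ _ _ (C_pos k) z0 (D_derive k lam Hlam) y Hy H0).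
Qed.

End SignDescent.

(** * Sign changes of the difference of two Gamma densities *)

Lemma exp_sub_sign (u v s : R) : 0 < s * (exp u - exp v) -> 0 < s * (u - v).
Proof.
  intros H. destruct (Rtotal_order u v) as [Huv|[Huv|Huv]].
  - pose proof (exp_increasing _ _ Huv). nra.
  - subst v. rewrite Rminus_diag, Rmult_0_r in H. lra.
  - pose proof (exp_increasing _ _ Huv). nra.
Qed.

(* Concavity (k <= 0) forbids the pattern + - + at u1 < u2 < u3; convexity (k > 0) forbids
   - + - at 0 < u1 < u2. *)
Lemma quadratic_no_pos_neg_pos (k c g u1 u2 u3 : R) : g < 0 -> 0 < u1 < u2 -> u2 < u3 ->
  0 < k * u1 ^ 2 + c * u1 + g -> k * u2 ^ 2 + c * u2 + g < 0 -> 0 < k * u3 ^ 2 + c * u3 + g -> False.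
Proof.
  intros Hg Hu12 Hu23.
  set (P1 := k * u1 ^ 2 + c * u1 + g). set (P2 := k * u2 ^ 2 + c * u2 + g).
  set (P3 := k * u3 ^ 2 + c * u3 + g). intros H1 H2 H3.
  destruct (Rle_lt_dec k 0) as [Hk|Hk].
  - assert (E : (u3 - u1) * P2 - (u3 - u2) * P1 - (u2 - u1) * P3 =
                - k * ((u2 - u1) * (u3 - u2) * (u3 - u1))) by (unfold P1, P2, P3; ring).
    assert (0 <= - k * ((u2 - u1) * (u3 - u2) * (u3 - u1)))
      by (apply Rmult_le_pos; [|apply Rmult_le_pos; [apply Rmult_le_pos|]]; lra).
    assert (0 < (u3 - u2) * P1) by (apply Rmult_lt_0_compat; lra).
    assert (0 < (u2 - u1) * P3) by (apply Rmult_lt_0_compat; lra).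
    assert ((u3 - u1) * P2 < 0) by nra.
    lra.
  - assert (E : u2 * P1 - u1 * P2 = (u2 - u1) * g + k * u1 * u2 * (u1 - u2)) by (unfold P1, P2, P3; ring).
    assert (0 < k * u1 * u2) by (apply Rmult_lt_0_compat; [apply Rmult_lt_0_compat|]; lra).
    assert (0 < u2 * P1) by (apply Rmult_lt_0_compat; lra).
    assert (u1 * P2 < 0) by nra.
    nra.
Qed.

Lemma quadratic_coeffs_of_three_roots (c2 c1 c0 y : R) :
  (forall z, z = y + 1 \/ z = y + 2 \/ z = y + 3 -> c2 * z ^ 2 + c1 * z + c0 = 0) ->
  c2 = 0 /\ c1 = 0.
Proof.
  intros H.
  pose proof (H (y + 1) ltac:(auto)). pose proof (H (y + 2) ltac:(auto)). pose proof (H (y + 3) ltac:(auto)).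
  assert (c2 = 0) by nra. subst c2. split; [reflexivity|nra].
Qed.

Section GammaDensityGap.
Variables ap al th1 th2 a b lam : R.
Hypothesis al_gt1 : 1 < al.
Hypothesis al_lt_ap : al < ap.
Hypothesis th1_pos : 0 < th1.
Hypothesis th2_pos : 0 < th2.
Hypothesis a_pos : 0 < a.
Hypothesis lam_pos : 0 < lam.

Definition density_gap (z : R) : R :=
  gamma_density ap th1 z - lam * gamma_density al th2 (a * z + b).

Definition log_gap (z : R) : R :=
  gamma_log_density ap th1 z - (ln lam + gamma_log_density al th2 (a * z + b)).

Definition gap_numer (z : R) : R :=
  (ap - 1) * (a * z + b) - (al - 1) * a * z + (a / th2 - / th1) * z * (a * z + b).

Lemma density_gap_exp (z : R) : 0 < z -> 0 < a * z + b ->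
  density_gap z = exp (gamma_log_density ap th1 z) - exp (ln lam + gamma_log_density al th2 (a * z + b)).
Proof.
  intros Hz Hw. unfold density_gap.
  rewrite !gamma_density_exp, exp_plus, exp_ln by lra. reflexivity.
Qed.

Lemma alternates_log_gap (l : list R) : forall s lo, 0 <= lo -> 0 <= a * lo + b ->
  alternates density_gap s lo l -> alternates log_gap s lo l.
Proof.
  induction l as [|p l IH]; intros s lo Hlo Hw; simpl; [auto|]. intros [Hp [Hs Halt]].
  split; [exact Hp|]. split.
  - rewrite density_gap_exp in Hs by nra. apply exp_sub_sign in Hs. unfold log_gap. exact Hs.
  - apply IH; [lra|nra|exact Halt].
Qed.

Lemma log_gap_derive (z : R) : 0 < z -> 0 < a * z + b ->
  is_derive log_gap z (gap_numer z / (z * (a * z + b))).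
Proof.
  intros Hz Hw. unfold log_gap, gamma_log_density, gap_numer.
  auto_derive; [repeat split; lra|field; repeat split; lra].
Qed.

Lemma gap_numer_sign_between (p1 p2 lo s : R) : 0 <= lo -> 0 <= a * lo + b -> lo < p1 < p2 ->
  0 < s * log_gap p1 -> 0 < - s * log_gap p2 -> exists q, p1 < q < p2 /\ s * gap_numer q < 0.
Proof.
  intros Hlo Hw Hp Hs1 Hs2.
  destruct (MVT_open log_gap (fun z => gap_numer z / (z * (a * z + b))) p1 p2) as [q [Hq Hmvt]];
    [lra| | |].
  - intros z Hz. apply log_gap_derive; nra.
  - intros z Hz. apply (continuity_pt_of_is_derive _ _ _ (log_gap_derive z ltac:(lra) ltac:(nra))).
  - exists q. split; [exact Hq|].
    set (d := gap_numer q / (q * (a * q + b))) in Hmvt.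
    assert (Hwq : 0 < a * q + b) by (assert (0 < a * (q - lo)) by (apply Rmult_lt_0_compat; lra); lra).
    assert (Hqw : 0 < q * (a * q + b)) by (apply Rmult_lt_0_compat; lra).
    assert (Hdiff : s * (log_gap p2 - log_gap p1) < 0) by lra.
    rewrite Hmvt in Hdiff.
    assert (Hsd : s * d < 0).
    { apply (Rmult_lt_reg_r (p2 - p1)); [lra|]. rewrite Rmult_0_l. lra. }
    replace (s * gap_numer q) with (s * d * (q * (a * q + b))) by (unfold d; field; split; lra).
    assert (0 < - (s * d) * (q * (a * q + b))) by (apply Rmult_lt_0_compat; lra). lra.
Qed.

Lemma gap_numer_expand (z : R) : gap_numer z =
  a * (a / th2 - / th1) * z ^ 2 + ((ap - al) * a + (a / th2 - / th1) * b) * z + (ap - 1) * b.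
Proof. unfold gap_numer. ring. Qed.

Lemma gap_numer_shift (z0 z : R) : a * z0 + b = 0 -> gap_numer z =
  a * ((a / th2 - / th1) * (z - z0) ^ 2 + (ap - al + (a / th2 - / th1) * z0) * (z - z0)
       + - ((al - 1) * z0)).
Proof. intros Hz0. unfold gap_numer. replace b with (- (a * z0)) by lra. ring. Qed.

Lemma gap_numer_pos_left (q1 q2 : R) : 0 <= b -> 0 < q1 < q2 ->
  0 < gap_numer q2 -> 0 < gap_numer q1.
Proof.
  intros Hb Hq HQ2. unfold gap_numer in *. set (k := a / th2 - / th1) in *.
  assert (0 < (ap - al) * (a * q1)) by (apply Rmult_lt_0_compat; [lra|apply Rmult_lt_0_compat; lra]).
  assert (0 <= (ap - 1) * b) by (apply Rmult_le_pos; lra).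
  destruct (Rle_lt_dec 0 k) as [Hk|Hk].
  - assert (0 <= k * q1 * (a * q1 + b)) by (apply Rmult_le_pos; [apply Rmult_le_pos|]; nra).
    lra.
  - set (Q1 := (ap - 1) * (a * q1 + b) - (al - 1) * a * q1 + k * q1 * (a * q1 + b)).
    set (Q2 := (ap - 1) * (a * q2 + b) - (al - 1) * a * q2 + k * q2 * (a * q2 + b)) in *.
    assert (E : q2 * Q1 - q1 * Q2 = (q2 - q1) * ((ap - 1) * b - k * a * q1 * q2))
      by (unfold Q1, Q2; ring).
    assert (0 < - k * a * q1 * q2)
      by (apply Rmult_lt_0_compat; [apply Rmult_lt_0_compat; [apply Rmult_lt_0_compat|]|]; lra).
    assert (0 <= (q2 - q1) * ((ap - 1) * b - k * a * q1 * q2)) by (apply Rmult_le_pos; lra).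
    assert (0 < q1 * Q2) by (apply Rmult_lt_0_compat; lra).
    assert (0 < q2 * Q1) by lra.
    destruct (Rle_lt_dec Q1 0); [|assumption].
    assert (0 <= q2 * - Q1) by (apply Rmult_le_pos; lra). lra.
Qed.

Lemma density_gap_no_alternation_from_nonneg (lo : R) (l : list R) : 0 <= b -> 0 <= lo ->
  length l = 3%nat -> alternates density_gap 1 lo l -> False.
Proof.
  intros Hb Hlo Hlen Halt. apply alternates_log_gap in Halt; [|lra|nra].
  destruct l as [|p1 [|p2 [|p3 [|]]]]; try discriminate.
  destruct Halt as (Hp1 & Hs1 & Hp2 & Hs2 & Hp3 & Hs3 & _).
  destruct (gap_numer_sign_between p1 p2 lo 1) as [q1 [Hq1 HQ1]]; try nra.
  destruct (gap_numer_sign_between p2 p3 lo (-1)) as [q2 [Hq2 HQ2]]; try nra.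
  pose proof (gap_numer_pos_left q1 q2 Hb ltac:(lra) ltac:(lra)). lra.
Qed.

Lemma density_gap_no_alternation_from_root (l : list R) : b < 0 ->
  length l = 4%nat -> alternates density_gap (-1) (- b / a) l -> False.
Proof.
  intros Hb Hlen Halt. set (z0 := - b / a) in *.
  assert (Hz0 : 0 < z0) by (unfold z0; apply Rdiv_lt_0_compat; lra).
  assert (Ez0 : a * z0 + b = 0) by (unfold z0; field; lra).
  apply alternates_log_gap in Halt; [|lra|lra].
  destruct l as [|p1 [|p2 [|p3 [|p4 [|]]]]]; try discriminate.
  destruct Halt as (Hp1 & Hs1 & Hp2 & Hs2 & Hp3 & Hs3 & Hp4 & Hs4 & _).
  destruct (gap_numer_sign_between p1 p2 z0 (-1)) as [q1 [Hq1 HQ1]]; try nra.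
  destruct (gap_numer_sign_between p2 p3 z0 1) as [q2 [Hq2 HQ2]]; try nra.
  destruct (gap_numer_sign_between p3 p4 z0 (-1)) as [q3 [Hq3 HQ3]]; try nra.
  rewrite (gap_numer_shift z0) in HQ1, HQ2, HQ3 by exact Ez0.
  apply (quadratic_no_pos_neg_pos (a / th2 - / th1) (ap - al + (a / th2 - / th1) * z0)
           (- ((al - 1) * z0)) (q1 - z0) (q2 - z0) (q3 - z0)); try nra.
Qed.

Lemma density_gap_not_eventually_zero (y : R) : 0 <= y -> 0 <= a * y + b ->
  (forall z, y < z -> density_gap z = 0) -> False.
Proof.
  intros Hy Hwy H0.
  assert (Hdom : forall z, y < z -> 0 < z /\ 0 < a * z + b) by (intros; split; nra).
  assert (HL : forall z, y < z -> log_gap z = 0).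
  { intros z Hz. destruct (Hdom z Hz). specialize (H0 z Hz).
    rewrite density_gap_exp in H0 by assumption.
    apply Rminus_diag_uniq, exp_inv in H0. unfold log_gap. lra. }
  assert (HQ : forall z, y < z -> gap_numer z = 0).
  { intros z Hz. destruct (Hdom z Hz) as [Hz0 Hw].
    assert (Hd : forall t, y < t -> is_derive log_gap t (- 1 * - (gap_numer t / (t * (a * t + b))))).
    { intros t Ht. destruct (Hdom t Ht).
      replace (- 1 * - (gap_numer t / (t * (a * t + b)))) with (gap_numer t / (t * (a * t + b)))
        by ring.
      apply log_gap_derive; assumption. }
    pose proof (eventually_zero_derivative log_gap _ 1 Rlt_0_1 y Hd y (Rle_refl y) HL z Hz) as E.
    replace (gap_numer z) with (gap_numer z / (z * (a * z + b)) * (z * (a * z + b)))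
      by (field; split; lra).
    simpl in E. rewrite <- (Ropp_involutive (gap_numer z / _)), E. ring. }
  destruct (quadratic_coeffs_of_three_roots (a * (a / th2 - / th1))
              ((ap - al) * a + (a / th2 - / th1) * b) ((ap - 1) * b) y) as [Hc2 Hc1].
  { intros z Hz. rewrite <- gap_numer_expand. apply HQ. lra. }
  assert (Hk : a / th2 - / th1 = 0) by nra. rewrite Hk, Rmult_0_l, Rplus_0_r in Hc1. nra.
Qed.

End GammaDensityGap.

(** * Tails of two Gamma distributions *)

Section GammaTails.
Variables ap al th1 th2 : R.
Hypothesis al_gt1 : 1 < al.
Hypothesis al_lt_ap : al < ap.
Hypothesis th1_pos : 0 < th1.
Hypothesis th2_pos : 0 < th2.

Local Notation TX := (tailT (gamma_density ap th1)).
Local Notation TY := (tailT (gamma_density al th2)).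

Let fX_dec : exp_decaying (gamma_density ap th1).
Proof. apply gamma_density_exp_decaying; lra. Qed.
Let fY_dec : exp_decaying (gamma_density al th2).
Proof. apply gamma_density_exp_decaying; lra. Qed.
Let fX_int1 : int_from (gamma_density ap th1) 0 = 1.
Proof. apply int_from_gamma_density; lra. Qed.
Let fY_int1 : int_from (gamma_density al th2) 0 = 1.
Proof. apply int_from_gamma_density; lra. Qed.

Definition tail_gap (a b : R) (k : nat) (lam z : R) : R := TX k z - lam * TY k (a * z + b).

Definition tail_gap_weight (a : R) (k : nat) (lam : R) : R :=
  lam * a * int_from (TX k) 0 / int_from (TY k) 0.

Section Chord.
Variables a b : R.
Hypothesis a_pos : 0 < a.

Lemma tail_gap_weight_pos (k : nat) (lam : R) : 0 < lam -> 0 < tail_gap_weight a k lam.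
Proof.
  intros Hlam. unfold tail_gap_weight.
  pose proof (tailT_int_from_pos _ fX_dec fX_int1 k).
  pose proof (tailT_int_from_pos _ fY_dec fY_int1 k).
  apply Rdiv_lt_0_compat; [apply Rmult_lt_0_compat; [apply Rmult_lt_0_compat|]|]; assumption.
Qed.

Lemma tail_gap_derive (z0 : R) : 0 <= z0 -> 0 <= a * z0 + b ->
  forall k lam, 0 < lam -> forall z, z0 < z ->
  is_derive (tail_gap a b (S k) lam) z
    (- / int_from (TX k) 0 * tail_gap a b k (tail_gap_weight a k lam) z).
Proof.
  intros Hz0 Hw0 k lam Hlam z Hz.
  assert (Hw : 0 < a * z + b) by (assert (0 < a * (z - z0)) by (apply Rmult_lt_0_compat; lra); lra).
  pose proof (tailT_int_from_pos _ fX_dec fX_int1 k).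
  pose proof (tailT_int_from_pos _ fY_dec fY_int1 k).
  apply is_derive_Reals.
  pose proof (proj1 (is_derive_Reals _ _ _) (tailT_S_derive _ fX_dec fX_int1 k z ltac:(lra))) as HX.
  pose proof (proj1 (is_derive_Reals _ _ _) (tailT_S_derive _ fY_dec fY_int1 k _ Hw)) as HY.
  assert (Hlin : derivable_pt_lim (fun z => a * z + b) z a).
  { apply is_derive_Reals. auto_derive; [exact I|ring]. }
  pose proof (derivable_pt_lim_minus _ _ _ _ _ HX
                (derivable_pt_lim_scal _ lam _ _ (derivable_pt_lim_comp _ _ _ _ _ Hlin HY))) as HD.
  unfold tail_gap, tail_gap_weight.
  replace (- / int_from (TX k) 0 * (TX k z - lam * a * int_from (TX k) 0 / int_from (TY k) 0 * TY k (a * z + b)))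
    with (- TX k z / int_from (TX k) 0 - lam * (- TY k (a * z + b) / int_from (TY k) 0 * a))
    by (field; lra).
  exact HD.
Qed.

Lemma tail_gap_lim0 (k : nat) (lam : R) :
  filterlim (tail_gap a b k lam) (Rbar_locally p_infty) (locally 0).
Proof.
  apply lim0_sub_scal_comp_affine; [exact a_pos| |]; apply exp_decaying_lim0, tailT_exp_decaying;
    assumption.
Qed.

Lemma tail_gap_continuous (k : nat) (lam z : R) : continuity_pt (tail_gap a b k lam) z.
Proof.
  apply continuity_pt_filterlim, (continuous_minus (TX k) (fun z => lam * TY k (a * z + b))).
  - apply (exp_decaying_cont _ (tailT_exp_decaying _ fX_dec fX_int1 k)).
  - apply (continuous_mult (fun _ => lam) (fun z => TY k (a * z + b))); [apply continuous_const|].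
    apply (continuous_comp (fun z => a * z + b) (TY k)).
    + apply continuous_of_ex_derive. auto_derive. exact I.
    + apply (exp_decaying_cont _ (tailT_exp_decaying _ fY_dec fY_int1 k)).
Qed.

Lemma tail_gap_rate_pos (k : nat) : 0 < / int_from (TX k) 0.
Proof. apply Rinv_0_lt_compat, tailT_int_from_pos; assumption. Qed.

Lemma tail_gap_pos_beyond (k : nat) (y : R) : 0 <= y -> 0 <= a * y + b ->
  tail_gap a b (S k) 1 y = 0 -> exists q, y < q /\ 0 < tail_gap a b k (tail_gap_weight a k 1) q.
Proof.
  intros Hy Hwy Fy.
  pose proof (tail_gap_derive y Hy Hwy k 1 Rlt_0_1) as Hder.
  set (F := tail_gap a b (S k) 1) in *. set (G := tail_gap a b k (tail_gap_weight a k 1)) in *.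
  destruct (classic (exists w, y < w /\ F w <> 0)) as [[w [Hw Fw]]|Hzero].
  - destruct (Rtotal_order (F w) 0) as [Fneg|[Fzero|Fpos]]; [|contradiction|].
    + destruct (sign_of_derivative_between F G _ (tail_gap_rate_pos k) y w 1 Hw) as [q [Hq Hsq]].
      * intros t Ht. apply Hder. lra.
      * intros t _. apply tail_gap_continuous.
      * lra.
      * exists q. split; lra.
    + destruct (sign_of_derivative_beyond F G _ (tail_gap_rate_pos k) y Hder w 1 (tail_gap_lim0 _ _))
        as [q [Hq Hsq]]; [exact Hw|lra|].
      exists q. split; lra.
  - exfalso.
    destruct (vanishing_descends (tail_gap a b) (fun k => / int_from (TX k) 0) (tail_gap_weight a) y
                tail_gap_rate_pos tail_gap_weight_pos (tail_gap_derive y Hy Hwy) (S k) 1 y Rlt_0_1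
                (Rle_refl y)) as [lam [Hlam Hvan]].
    + intros t Ht. apply NNPP. intros Hne. apply Hzero. exists t. split; assumption.
    + apply (density_gap_not_eventually_zero ap al th1 th2 a b lam al_gt1 al_lt_ap th1_pos th2_pos a_pos
               Hlam y Hy Hwy Hvan).
Qed.

Lemma tail_gap_neg_before_root (k : nat) (w : R) : 0 < w -> a * w + b <= 0 ->
  tail_gap a b (S k) 1 w < 0.
Proof.
  intros Hw Hroot. unfold tail_gap.
  rewrite (tailT_S_nonpos _ fY_dec fY_int1 k _ Hroot).
  pose proof (tailT_S_decreasing _ fX_dec fX_int1 k 0 w ltac:(lra)) as HX.
  rewrite (tailT_S_nonpos _ fX_dec fX_int1 k 0 (Rle_refl 0)) in HX. lra.
Qed.

Lemma tail_gap_dip_alternates (k : nat) (x z y : R) : 0 <= x -> 0 <= a * x + b -> x < z < y ->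
  tail_gap a b (S k) 1 x = 0 -> tail_gap a b (S k) 1 z < 0 -> tail_gap a b (S k) 1 y = 0 ->
  exists q1 q2 q3, alternates (tail_gap a b k (tail_gap_weight a k 1)) 1 x (q1 :: q2 :: q3 :: nil).
Proof.
  intros Hx Hwx Hxzy Fx Fz Fy.
  pose proof (tail_gap_derive x Hx Hwx k 1 Rlt_0_1) as Hder.
  set (F := tail_gap a b (S k) 1) in *. set (G := tail_gap a b k (tail_gap_weight a k 1)) in *.
  destruct (sign_of_derivative_between F G _ (tail_gap_rate_pos k) x z 1) as [q1 [Hq1 Hs1]];
    [lra|intros t Ht; apply Hder; lra|intros t _; apply tail_gap_continuous|lra|].
  destruct (sign_of_derivative_between F G _ (tail_gap_rate_pos k) z y (-1)) as [q2 [Hq2 Hs2]];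
    [lra|intros t Ht; apply Hder; lra|intros t _; apply tail_gap_continuous|lra|].
  assert (Hwy : 0 < a * (y - x)) by (apply Rmult_lt_0_compat; lra).
  destruct (tail_gap_pos_beyond k y) as [q3 [Hq3 Hs3]]; [lra|lra|exact Fy|].
  exists q1, q2, q3. unfold G in *. simpl. repeat split; lra.
Qed.

Lemma tail_gap_no_dip (k : nat) (x z y : R) : 0 <= x -> 0 <= a * x + b -> x < z < y ->
  tail_gap a b (S k) 1 x = 0 -> tail_gap a b (S k) 1 z < 0 -> tail_gap a b (S k) 1 y = 0 -> False.
Proof.
  intros Hx Hwx Hxzy Fx Fz Fy.
  destruct (tail_gap_dip_alternates k x z y Hx Hwx Hxzy Fx Fz Fy) as (q1 & q2 & q3 & Halt).
  pose proof (tail_gap_weight_pos k 1 Rlt_0_1) as Hw1.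
  destruct (Rle_lt_dec 0 b) as [Hb|Hb].
  - destruct (alternates_descend (tail_gap a b) _ (tail_gap_weight a) x tail_gap_rate_pos
                tail_gap_weight_pos (tail_gap_derive x Hx Hwx) (fun k lam _ => tail_gap_lim0 (S k) lam)
                k _ 1 x q1 _ Hw1
                (Rle_refl x) Halt) as (lam & l & Hlam & Hlen & Halt0).
    exact (density_gap_no_alternation_from_nonneg ap al th1 th2 a b lam al_gt1 al_lt_ap th1_pos
             th2_pos a_pos Hlam x l Hb Hx Hlen Halt0).
  - (* The fourth sign change sits between -b/a and x. *)
    set (z0 := - b / a).
    assert (Hz0 : 0 < z0) by (unfold z0; apply Rdiv_lt_0_compat; lra).
    assert (Ez0 : a * z0 + b = 0) by (unfold z0; field; lra).
    pose proof (tail_gap_neg_before_root k z0 Hz0 ltac:(lra)) as Fz0.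
    assert (Hz0x : z0 < x).
    { destruct (Rlt_le_dec z0 x) as [|Hle]; [assumption|].
      assert (0 <= a * (z0 - x)) by (apply Rmult_le_pos; lra).
      assert (Hxpos : 0 < x) by (destruct Hx as [|<-]; [assumption|lra]).
      pose proof (tail_gap_neg_before_root k x Hxpos ltac:(lra)). lra. }
    pose proof (tail_gap_derive z0 (Rlt_le _ _ Hz0) (Req_le _ _ (eq_sym Ez0)) k 1 Rlt_0_1) as Hder.
    destruct (sign_of_derivative_between (tail_gap a b (S k) 1) (tail_gap a b k (tail_gap_weight a k 1))
                _ (tail_gap_rate_pos k) z0 x (-1) Hz0x) as [q0 [Hq0 Hs0]];
      [intros t Ht; apply Hder; lra|intros t _; apply tail_gap_continuous|lra|].
    assert (Halt' : alternates (tail_gap a b k (tail_gap_weight a k 1)) (-1) z0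
                      (q0 :: q1 :: q2 :: q3 :: nil)).
    { split; [lra|]. split; [exact Hs0|]. replace (- -1) with 1 by ring.
      apply (alternates_weaken _ _ x); [lra|exact Halt]. }
    destruct (alternates_descend (tail_gap a b) _ (tail_gap_weight a) z0 tail_gap_rate_pos
                tail_gap_weight_pos (tail_gap_derive z0 (Rlt_le _ _ Hz0) (Req_le _ _ (eq_sym Ez0)))
                (fun k lam _ => tail_gap_lim0 (S k) lam) k _ (-1) z0 q0 _ Hw1 (Rle_refl z0) Halt')
      as (lam & l & Hlam & Hlen & Halt0).
    exact (density_gap_no_alternation_from_root ap al th1 th2 a b lam al_gt1 al_lt_ap th1_pos
             th2_pos a_pos Hlam l Hb Hlen Halt0).
Qed.

End Chord.

Lemma gamma_comparison_below_chord (k : nat) (c : R -> R) :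
  is_sIFR_comparison (gamma_density ap th1) (gamma_density al th2) (S k) c ->
  forall x z y, 0 <= x < z -> z < y -> c z <= c x + (c y - c x) / (y - x) * (z - x).
Proof.
  intros Hc x z y [Hx Hxz] Hzy.
  destruct (Hc x Hx) as [Hcx Ex]. destruct (Hc y ltac:(lra)) as [Hcy Ey].
  destruct (Hc z ltac:(lra)) as [Hcz Ez].
  pose proof (sIFR_comparison_increasing _ _ fX_dec fY_dec fX_int1 fY_int1 k c Hc x y ltac:(lra)).
  apply Rnot_lt_le. intros Habove.
  set (a := (c y - c x) / (y - x)) in *.
  assert (Ha : 0 < a) by (apply Rdiv_lt_0_compat; lra).
  assert (Eax : a * x + (c x - a * x) = c x) by ring.
  assert (Eay : a * y + (c x - a * x) = c y) by (unfold a; field; lra).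
  assert (Haz : 0 < a * (z - x)) by (apply Rmult_lt_0_compat; lra).
  apply (tail_gap_no_dip a (c x - a * x) Ha k x z y Hx); unfold tail_gap; try lra.
  - rewrite Eax, Ex. ring.
  - pose proof (tailT_S_decreasing _ fY_dec fY_int1 k (a * z + (c x - a * x)) (c z) ltac:(lra)). lra.
  - rewrite Eay, Ey. ring.
Qed.

End GammaTails.

Theorem proposition1 (s : nat) (alpha' alpha theta1 theta2 : R) :
  (1 <= s)%nat -> 1 < alpha -> alpha < alpha' -> 0 < theta1 -> 0 < theta2 ->
  more_sIFR (gamma_density alpha' theta1) (gamma_density alpha theta2) s.
Proof.
  intros Hs Hal Hap Hth1 Hth2. destruct s as [|k]; [lia|].
  split.
  - apply sIFR_comparison_exists;
      (apply gamma_density_exp_decaying || apply int_from_gamma_density); lra.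
  - intros c Hc. apply convex_on_of_below_chords.
    exact (gamma_comparison_below_chord alpha' alpha theta1 theta2 Hal Hap Hth1 Hth2 k c Hc).
Qed.
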